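(* Let $n=2$ and let $t\mapsto (q(t),p(t))$ be a solution of $\dot q_i=\partial H/\partial p_i$, $\dot p_i=-\partial H/\partial q_i$, $H=\frac12\sum_{i,j=1}^2p_ip_je^{-|q_i-q_j|}$, with $q_1(0)>q_2(0)$, normalized so that $p_1^2+p_2^2+2p_1p_2e^{-|q_1-q_2|}=1$. If $|p_1+p_2|<1$ and $p_1-p_2<0$ at $t=0$, then $q_1(t)-q_2(t)\to0$ in finite time (the trajectory reaches the singular set $\{q_1=q_2\}$ in finite time). If $|p_1+p_2|=1$ and $p_1-p_2<0$ at $t=0$, then $q_1(t)-q_2(t)\to0$ as $t\to\infty$ (the singular set is approached only asymptotically).
   Context: The quantity $p_1+p_2$ is constant along solutions. *)

From Stdlib Require Import Reals.
From Coquelicot Require Import Coquelicot.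
Open Scope R_scope.

Definition Ham (q1 q2 p1 p2 : R) : R :=
  / 2 * ( p1 * p1 * exp (- Rabs (q1 - q1)) + p1 * p2 * exp (- Rabs (q1 - q2))
        + p2 * p1 * exp (- Rabs (q2 - q1)) + p2 * p2 * exp (- Rabs (q2 - q2))).

(* (q1,q2,p1,p2) is a solution of Hamilton's equations
     dq_i/dt = dH/dp_i,  dp_i/dt = - dH/dq_i
   on the time interval [0, T) (T possibly +oo), staying in the region
   q1 > q2 (where H is smooth).  The equations hold on (0, T), and the
   trajectory is right-continuous at the initial time 0. *)
Definition is_solution (q1 q2 p1 p2 : R -> R) (T : Rbar) : Prop :=
  (forall t : R, 0 < t -> Rbar_lt t T ->
     is_derive q1 t (Derive (fun x => Ham (q1 t) (q2 t) x (p2 t)) (p1 t)) /\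
     is_derive q2 t (Derive (fun x => Ham (q1 t) (q2 t) (p1 t) x) (p2 t)) /\
     is_derive p1 t (- Derive (fun x => Ham x (q2 t) (p1 t) (p2 t)) (q1 t)) /\
     is_derive p2 t (- Derive (fun x => Ham (q1 t) x (p1 t) (p2 t)) (q2 t))) /\
  filterlim q1 (at_right 0) (locally (q1 0)) /\
  filterlim q2 (at_right 0) (locally (q2 0)) /\
  filterlim p1 (at_right 0) (locally (p1 0)) /\
  filterlim p2 (at_right 0) (locally (p2 0)) /\
  (forall t : R, 0 <= t -> Rbar_lt t T -> q2 t < q1 t).

Definition has_init (q1 q2 p1 p2 : R -> R) (a1 a2 b1 b2 : R) : Prop :=
  q1 0 = a1 /\ q2 0 = a2 /\ p1 0 = b1 /\ p2 0 = b2.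

From Stdlib Require Import Reals Lra.
From Coquelicot Require Import Coquelicot.
Open Scope R_scope.

(* On the region q1 > q2 the flow preserves the total momentum P = p1 + p2 and
   the energy p1^2 + p2^2 + 2 p1 p2 e^(-(q1 - q2)) = 1.  For u = p1 - p2 the energy
   constraint reads (P^2 - u^2) e^(-(q1 - q2)) = mu^2 - u^2 with mu^2 = 2 - P^2, so
   u obeys the Riccati equation u' = (mu^2 - u^2) / 2 and e^(q1 - q2) is a rational
   function of u.
   If |P| < 1, the constraint forces u^2 > mu^2, hence u < -mu for all times, and
   (u - mu) / (u + mu) = r0 e^(-mu t) with r0 > 1: it reaches 1 at T = ln r0 / mu,
   where u blows up and q1 - q2 tends to 0.
   If |P| = 1, the constraint forces p1 p2 = 0, hence u = -1, and then
   (e^(q1 - q2) - 1) e^t is constant, so q1 - q2 tends to 0 as t tends to infinity.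
   In both cases the formulas integrate to explicit solutions, which gives existence. *)

(** * Calculus on a half-open time interval *)

Lemma ln_gt_0 x : 1 < x -> 0 < ln x.
Proof. intro; rewrite <- ln_1; apply ln_increasing; lra. Qed.

Lemma exp_neg_lt_1 x : 0 < x -> exp (- x) < 1.
Proof. intro Hx; rewrite <- exp_0; apply exp_increasing; lra. Qed.

Lemma exp_mul_exp_neg x : exp x * exp (- x) = 1.
Proof. rewrite <- exp_plus, Rplus_opp_r; apply exp_0. Qed.

Section Limits.

Context {T : Type} (F : (T -> Prop) -> Prop) {FF : Filter F}.

Lemma filterlim_fun_plus (f g : T -> R) a b :
  filterlim f F (locally a) -> filterlim g F (locally b) ->
  filterlim (fun x => f x + g x) F (locally (a + b)).
Proof.
  intros Hf Hg; eapply filterlim_comp_2; [exact Hf | exact Hg |].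
  exact (@filterlim_plus R_AbsRing R_NormedModule a b).
Qed.

Lemma filterlim_fun_mult (f g : T -> R) a b :
  filterlim f F (locally a) -> filterlim g F (locally b) ->
  filterlim (fun x => f x * g x) F (locally (a * b)).
Proof.
  intros Hf Hg; eapply filterlim_comp_2; [exact Hf | exact Hg |].
  exact (@filterlim_mult R_AbsRing a b).
Qed.

Lemma filterlim_ex_derive_comp (f : T -> R) (g : R -> R) a :
  filterlim f F (locally a) -> ex_derive g a ->
  filterlim (fun x => g (f x)) F (locally (g a)).
Proof.
  intros Hf Hg; eapply filterlim_comp; [exact Hf |].
  exact (ex_derive_continuous g a Hg).
Qed.

Lemma filterlim_fun_minus (f g : T -> R) a b :
  filterlim f F (locally a) -> filterlim g F (locally b) ->
  filterlim (fun x => f x - g x) F (locally (a - b)).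
Proof.
  intros Hf Hg; apply filterlim_fun_plus; [exact Hf |].
  apply (filterlim_ex_derive_comp g Ropp); [exact Hg | auto_derive; auto].
Qed.

End Limits.

Lemma ex_derive_within (D : R -> Prop) (f : R -> R) (x : R) :
  ex_derive f x -> filterlim f (within D (locally x)) (locally (f x)).
Proof.
  intro H; eapply filterlim_filter_le_1; [apply filter_le_within |].
  exact (ex_derive_continuous (V := R_NormedModule) f x H).
Qed.

Lemma derive_nonpos_le (f df : R -> R) (s t : R) :
  s < t -> (forall x, s <= x <= t -> is_derive f x (df x)) ->
  (forall x, s <= x <= t -> df x <= 0) -> f t <= f s.
Proof.
  intros Hst Hd Hneg.
  destruct (MVT_gen f s t df) as [c [Hc Hmvt]]; rewrite Rmin_left, Rmax_right in * by lra.
  - intros x Hx; apply Hd; lra.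
  - intros x Hx; apply continuity_pt_filterlim.
    apply (ex_derive_continuous (V := R_NormedModule)); exists (df x); apply Hd; lra.
  - assert (df c * (t - s) <= 0) by (apply Rmult_le_0_r; [apply Hneg |]; lra).
    lra.
Qed.

Lemma derive_nonpos_le_from_0 (f df : R -> R) (T : Rbar) :
  (forall x, 0 < x -> Rbar_lt x T -> is_derive f x (df x)) ->
  (forall x, 0 < x -> Rbar_lt x T -> df x <= 0) ->
  filterlim f (at_right 0) (locally (f 0)) ->
  forall t, 0 <= t -> Rbar_lt t T -> f t <= f 0.
Proof.
  intros Hd Hneg Hc t Ht HtT.
  destruct (Req_dec t 0) as [-> | Ht0]; [lra |].
  assert (HT : forall x, x <= t -> Rbar_lt x T)
    by (intros x Hx; apply Rbar_le_lt_trans with t; [simpl; lra | exact HtT]).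
  change (Rbar_le (f t) (f 0)).
  apply (filterlim_le (F := at_right 0) (fun _ => f t) f).
  - exists (mkposreal t ltac:(lra)); intros s Hs Hs0.
    change (Rabs (s - 0) < t) in Hs; rewrite Rminus_0_r, Rabs_pos_eq in Hs by lra.
    apply (derive_nonpos_le f df); [lra | |]; intros x Hx;
      [apply Hd | apply Hneg]; try lra; apply HT; lra.
  - apply filterlim_const.
  - exact Hc.
Qed.

Lemma derive_zero_const_from_0 (f : R -> R) (T : Rbar) :
  (forall x, 0 < x -> Rbar_lt x T -> is_derive f x 0) ->
  filterlim f (at_right 0) (locally (f 0)) ->
  forall t, 0 <= t -> Rbar_lt t T -> f t = f 0.
Proof.
  intros Hd Hc t Ht HtT; apply Rle_antisym.
  - apply (derive_nonpos_le_from_0 f (fun _ => 0) T); auto; intros; lra.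
  - assert (- f t <= - f 0); [| lra].
    apply (derive_nonpos_le_from_0 (fun x => - f x) (fun _ => - 0) T); auto.
    + intros x Hx HxT; apply (is_derive_opp f); auto.
    + intros; lra.
    + apply (filterlim_ex_derive_comp _ f Ropp); [exact Hc | auto_derive; auto].
Qed.

(** * The two-peakon system *)

Lemma Ham_expand q1 q2 p1 p2 :
  Ham q1 q2 p1 p2 = / 2 * (p1 * p1 + 2 * p1 * p2 * exp (- Rabs (q1 - q2)) + p2 * p2).
Proof.
  unfold Ham; rewrite !Rminus_diag, Rabs_R0, Ropp_0, exp_0, (Rabs_minus_sym q2 q1); ring.
Qed.

Lemma Derive_Ham_p1 q1 q2 p1 p2 :
  Derive (fun x => Ham q1 q2 x p2) p1 = p1 + p2 * exp (- Rabs (q1 - q2)).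
Proof.
  rewrite (Derive_ext _ _ _ (fun x => Ham_expand q1 q2 x p2)).
  apply is_derive_unique; auto_derive; auto; field.
Qed.

Lemma Derive_Ham_p2 q1 q2 p1 p2 :
  Derive (fun x => Ham q1 q2 p1 x) p2 = p2 + p1 * exp (- Rabs (q1 - q2)).
Proof.
  rewrite (Derive_ext _ _ _ (fun x => Ham_expand q1 q2 p1 x)).
  apply is_derive_unique; auto_derive; auto; field.
Qed.

Lemma Derive_Ham_q1 q1 q2 p1 p2 : q2 < q1 ->
  Derive (fun x => Ham x q2 p1 p2) q1 = - (p1 * p2 * exp (- (q1 - q2))).
Proof.
  intro Hq; rewrite (Derive_ext _ _ _ (fun x => Ham_expand x q2 p1 p2)).
  apply is_derive_unique.
  apply is_derive_ext_loc with (fun x => / 2 * (p1 * p1 + 2 * p1 * p2 * exp (- (x - q2)) + p2 * p2)).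
  - apply (filter_imp (fun x => q2 < x)); [| exact (open_gt q2 q1 Hq)].
    intros x Hx; rewrite Rabs_pos_eq by lra; reflexivity.
  - auto_derive; auto; unfold Rminus; field.
Qed.

Lemma Derive_Ham_q2 q1 q2 p1 p2 : q2 < q1 ->
  Derive (fun x => Ham q1 x p1 p2) q2 = p1 * p2 * exp (- (q1 - q2)).
Proof.
  intro Hq; rewrite (Derive_ext _ _ _ (fun x => Ham_expand q1 x p1 p2)).
  apply is_derive_unique.
  apply is_derive_ext_loc with (fun x => / 2 * (p1 * p1 + 2 * p1 * p2 * exp (- (q1 - x)) + p2 * p2)).
  - apply (filter_imp (fun x => x < q1)); [| exact (open_lt q1 q2 Hq)].
    intros x Hx; rewrite Rabs_pos_eq by lra; reflexivity.
  - auto_derive; auto; unfold Rminus; field.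
Qed.

Definition peakon_ode (q1 q2 p1 p2 : R -> R) (t : R) : Prop :=
  is_derive q1 t (p1 t + p2 t * exp (- (q1 t - q2 t))) /\
  is_derive q2 t (p2 t + p1 t * exp (- (q1 t - q2 t))) /\
  is_derive p1 t (p1 t * p2 t * exp (- (q1 t - q2 t))) /\
  is_derive p2 t (- (p1 t * p2 t * exp (- (q1 t - q2 t)))).

Lemma hamilton_iff_peakon_ode q1 q2 p1 p2 t : q2 t < q1 t ->
  (is_derive q1 t (Derive (fun x => Ham (q1 t) (q2 t) x (p2 t)) (p1 t)) /\
   is_derive q2 t (Derive (fun x => Ham (q1 t) (q2 t) (p1 t) x) (p2 t)) /\
   is_derive p1 t (- Derive (fun x => Ham x (q2 t) (p1 t) (p2 t)) (q1 t)) /\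
   is_derive p2 t (- Derive (fun x => Ham (q1 t) x (p1 t) (p2 t)) (q2 t)))
  <-> peakon_ode q1 q2 p1 p2 t.
Proof.
  intro Hq; unfold peakon_ode.
  rewrite Derive_Ham_p1, Derive_Ham_p2, Derive_Ham_q1, Derive_Ham_q2, Ropp_involutive,
    Rabs_pos_eq by lra.
  reflexivity.
Qed.

Lemma solution_peakon_ode q1 q2 p1 p2 T :
  is_solution q1 q2 p1 p2 T ->
  forall t, 0 < t -> Rbar_lt t T -> peakon_ode q1 q2 p1 p2 t.
Proof.
  intros [Hd [_ [_ [_ [_ Hlt]]]]] t Ht HtT.
  apply hamilton_iff_peakon_ode; [apply Hlt; auto; lra | auto].
Qed.

Lemma peakon_ode_is_solution q1 q2 p1 p2 T : Rbar_lt 0 T ->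
  (forall t, 0 <= t -> Rbar_lt t T -> q2 t < q1 t /\ peakon_ode q1 q2 p1 p2 t) ->
  is_solution q1 q2 p1 p2 T.
Proof.
  intros HT Hode.
  destruct (Hode 0 (Rle_refl 0) HT) as [_ [Hq1 [Hq2 [Hp1 Hp2]]]].
  split; [| split; [| split; [| split; [| split]]]].
  - intros t Ht HtT; apply hamilton_iff_peakon_ode; apply Hode; auto; lra.
  - apply ex_derive_within; eexists; exact Hq1.
  - apply ex_derive_within; eexists; exact Hq2.
  - apply ex_derive_within; eexists; exact Hp1.
  - apply ex_derive_within; eexists; exact Hp2.
  - intros t Ht HtT; apply Hode; auto.
Qed.

Definition energy (p1 p2 x : R) : R := p1 * p1 + p2 * p2 + 2 * p1 * p2 * exp (- x).

Lemma Ham_energy a1 a2 b1 b2 : a2 < a1 -> 2 * Ham a1 a2 b1 b2 = energy b1 b2 (a1 - a2).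
Proof.
  intro Ha; rewrite Ham_expand, Rabs_pos_eq by lra; unfold energy; field.
Qed.

Lemma energy_momentum p1 p2 x :
  energy p1 p2 x = (p1 + p2) * (p1 + p2) - 2 * (p1 * p2) * (1 - exp (- x)).
Proof. unfold energy; ring. Qed.

Section Conservation.

Variables (q1 q2 p1 p2 : R -> R) (T : Rbar).
Hypothesis Hsol : is_solution q1 q2 p1 p2 T.

Lemma solution_gap_pos t : 0 <= t -> Rbar_lt t T -> 0 < q1 t - q2 t.
Proof. destruct Hsol as [_ [_ [_ [_ [_ Hlt]]]]]; intros Ht HtT; specialize (Hlt t Ht HtT); lra. Qed.

Lemma solution_gap_at_right :
  filterlim (fun t => q1 t - q2 t) (at_right 0) (locally (q1 0 - q2 0)).
Proof. destruct Hsol as [_ [Hq1 [Hq2 _]]]; exact (filterlim_fun_minus _ _ _ _ _ Hq1 Hq2). Qed.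

Lemma solution_pdiff_at_right :
  filterlim (fun t => p1 t - p2 t) (at_right 0) (locally (p1 0 - p2 0)).
Proof. destruct Hsol as [_ [_ [_ [Hp1 [Hp2 _]]]]]; exact (filterlim_fun_minus _ _ _ _ _ Hp1 Hp2). Qed.

Lemma momentum_conserved t : 0 <= t -> Rbar_lt t T -> p1 t + p2 t = p1 0 + p2 0.
Proof.
  destruct Hsol as [_ [_ [_ [Hp1 [Hp2 _]]]]].
  apply (derive_zero_const_from_0 (fun t => p1 t + p2 t) T).
  - intros x Hx HxT; destruct (solution_peakon_ode _ _ _ _ _ Hsol x Hx HxT) as [_ [_ [Dp1 Dp2]]].
    replace 0 with (p1 x * p2 x * exp (- (q1 x - q2 x)) + - (p1 x * p2 x * exp (- (q1 x - q2 x))))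
      by ring.
    exact (is_derive_plus p1 p2 _ _ _ Dp1 Dp2).
  - exact (filterlim_fun_plus _ _ _ _ _ Hp1 Hp2).
Qed.

Lemma energy_conserved t : 0 <= t -> Rbar_lt t T ->
  energy (p1 t) (p2 t) (q1 t - q2 t) = energy (p1 0) (p2 0) (q1 0 - q2 0).
Proof.
  destruct Hsol as [_ [_ [_ [Hp1 [Hp2 _]]]]].
  apply (derive_zero_const_from_0 (fun t => energy (p1 t) (p2 t) (q1 t - q2 t)) T); unfold energy.
  - intros x Hx HxT;
      destruct (solution_peakon_ode _ _ _ _ _ Hsol x Hx HxT) as [Dq1 [Dq2 [Dp1 Dp2]]].
    auto_derive.
    + repeat split; eexists; eassumption.
    + rewrite (is_derive_unique (fun y : R => q1 y) _ _ Dq1),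
        (is_derive_unique (fun y : R => q2 y) _ _ Dq2),
        (is_derive_unique (fun y : R => p1 y) _ _ Dp1),
        (is_derive_unique (fun y : R => p2 y) _ _ Dp2).
      unfold Rminus; ring.
  - pose proof (filterlim_ex_derive_comp _ _ (fun y => exp (- y)) _ solution_gap_at_right
      ltac:(auto_derive; auto)) as Hexp.
    cbv beta in Hexp.
    repeat first [ exact _ | eassumption | apply filterlim_const
                 | apply filterlim_fun_plus | apply filterlim_fun_mult ].
Qed.

End Conservation.

(** * Collision in finite time: |p1 + p2| < 1 *)

Lemma energy_one_subcritical p1 p2 x :
  energy p1 p2 x = 1 -> 0 < x -> (p1 + p2) * (p1 + p2) < 1 ->
  p1 * p2 < 0 /\ 2 - (p1 + p2) * (p1 + p2) < (p1 - p2) * (p1 - p2).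
Proof.
  rewrite energy_momentum; intros HE Hx HP.
  pose proof (exp_neg_lt_1 x Hx); pose proof (exp_pos (- x)).
  assert (p1 * p2 < 0) by nra.
  split; nra.
Qed.

Lemma energy_one_quadratic p1 p2 x : energy p1 p2 x = 1 ->
  ((p1 + p2) * (p1 + p2) - (p1 - p2) * (p1 - p2)) * exp (- x)
  = 2 - (p1 + p2) * (p1 + p2) - (p1 - p2) * (p1 - p2).
Proof. unfold energy; intro HE; nra. Qed.

Section Subcritical.

Variables P mu : R.
Hypothesis HP : P * P < 1.
Hypothesis Hmu_pos : 0 < mu.
Hypothesis Hmu : mu * mu = 2 - P * P.

(* Along a solution [u = p1 - p2] obeys [u' = (mu^2 - u^2) / 2], which this change
   of variable linearises into [r' = - mu r]. *)
Definition riccati_ratio (u : R) : R := (u - mu) / (u + mu).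
Definition pdiff_of_ratio (r : R) : R := - mu * (r + 1) / (r - 1).
Definition exp_gap_of_ratio (r : R) : R :=
  (mu * mu * (r + 1) * (r + 1) - P * P * (r - 1) * (r - 1)) / (4 * mu * mu * r).
Definition ratio_at (r0 t : R) : R := r0 * exp (- (mu * t)).

Lemma abs_momentum_lt_mu : - mu < P < mu.
Proof. split; nra. Qed.

Lemma energy_one_exp_gap p1 p2 x :
  energy p1 p2 x = 1 -> p1 + p2 = P -> mu * mu < (p1 - p2) * (p1 - p2) ->
  exp x = ((p1 - p2) * (p1 - p2) - P * P) / ((p1 - p2) * (p1 - p2) - mu * mu).
Proof.
  intros HE HPp Hu; pose proof (energy_one_quadratic _ _ _ HE) as Hq.
  rewrite HPp, <- Hmu in Hq.
  pose proof (exp_mul_exp_neg x).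
  apply (f_equal (Rmult (exp x))) in Hq.
  field_simplify_eq; nra.
Qed.

Lemma energy_one_pdiff_lt p1 p2 x :
  energy p1 p2 x = 1 -> 0 < x -> p1 + p2 = P -> p1 - p2 < 0 -> p1 - p2 < - mu.
Proof.
  intros HE Hx HPp Hu.
  destruct (energy_one_subcritical _ _ _ HE Hx) as [_ Hsq]; [congruence |].
  rewrite HPp, <- Hmu in Hsq; nra.
Qed.

Lemma pdiff_of_riccati_ratio u : u < - mu -> pdiff_of_ratio (riccati_ratio u) = u.
Proof. intro Hu; unfold pdiff_of_ratio, riccati_ratio; field; lra. Qed.

Lemma exp_gap_of_riccati_ratio u : u < - mu ->
  exp_gap_of_ratio (riccati_ratio u) = (u * u - P * P) / (u * u - mu * mu).
Proof.
  intro Hu; pose proof abs_momentum_lt_mu.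
  unfold exp_gap_of_ratio, riccati_ratio; field; repeat split; nra.
Qed.

Lemma riccati_ratio_gt_1 u : u < - mu -> 1 < riccati_ratio u.
Proof.
  intro Hu; unfold riccati_ratio.
  apply Rmult_lt_reg_r with (- (u + mu)); [lra |].
  replace ((u - mu) / (u + mu) * - (u + mu)) with (- (u - mu)) by (field; lra); lra.
Qed.

Lemma ratio_gt_1_bounds r : 1 < r ->
  0 < mu * (r + 1) + P * (r - 1) /\ 0 < mu * (r + 1) - P * (r - 1) /\
  1 < exp_gap_of_ratio r.
Proof.
  intro Hr; pose proof abs_momentum_lt_mu.
  split; [nra | split; [nra |]].
  replace (exp_gap_of_ratio r)
    with (1 + (mu * mu - P * P) * ((r - 1) * (r - 1)) / (4 * mu * mu * r))
    by (unfold exp_gap_of_ratio; field; lra).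
  assert (0 < (mu * mu - P * P) * ((r - 1) * (r - 1)) / (4 * mu * mu * r)); [| lra].
  apply Rdiv_lt_0_compat; [apply Rmult_lt_0_compat |]; nra.
Qed.

Lemma ratio_at_gt_1 r0 t : 1 < r0 -> t < ln r0 / mu -> 1 < ratio_at r0 t.
Proof.
  intros Hr Ht; unfold ratio_at.
  assert (mu * t < ln r0).
  { apply Rmult_lt_reg_r with (/ mu); [apply Rinv_0_lt_compat; lra |].
    replace (mu * t * / mu) with t by (field; lra); exact Ht. }
  assert (Hexp : exp (- ln r0) < exp (- (mu * t))) by (apply exp_increasing; lra).
  rewrite exp_Ropp, exp_ln in Hexp by lra.
  apply Rmult_lt_compat_l with (r := r0) in Hexp; [| lra].
  rewrite Rinv_r in Hexp by lra; exact Hexp.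
Qed.

Lemma ratio_at_collision r0 : 0 < r0 -> ratio_at r0 (ln r0 / mu) = 1.
Proof.
  intro Hr; unfold ratio_at.
  replace (- (mu * (ln r0 / mu))) with (- ln r0) by (field; lra).
  rewrite exp_Ropp, exp_ln by lra; field; lra.
Qed.

(* [q1 + q2] has derivative [P (1 + exp (- (q1 - q2)))]; [center_shift] is the
   non-linear part of its primitive. *)
Definition center_shift (r : R) : R :=
  ln ((mu * (r + 1) + P * (r - 1)) / (mu * (r + 1) - P * (r - 1))).

Definition collide_q1 (r0 C t : R) : R :=
  (C + P * t - center_shift (ratio_at r0 t) + ln (exp_gap_of_ratio (ratio_at r0 t))) / 2.
Definition collide_q2 (r0 C t : R) : R :=
  (C + P * t - center_shift (ratio_at r0 t) - ln (exp_gap_of_ratio (ratio_at r0 t))) / 2.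
Definition collide_p1 (r0 t : R) : R := (P + pdiff_of_ratio (ratio_at r0 t)) / 2.
Definition collide_p2 (r0 t : R) : R := (P - pdiff_of_ratio (ratio_at r0 t)) / 2.

Lemma collide_gap r0 C t :
  collide_q1 r0 C t - collide_q2 r0 C t = ln (exp_gap_of_ratio (ratio_at r0 t)).
Proof. unfold collide_q1, collide_q2; field. Qed.

Local Ltac nonzero_or_positive :=
  repeat split; try exact I;
  first [ intro; nra | apply Rmult_lt_0_compat; [nra | apply Rinv_0_lt_compat; nra] | nra ].

Lemma collide_peakon_ode r0 C t : 1 < ratio_at r0 t ->
  peakon_ode (collide_q1 r0 C) (collide_q2 r0 C) (collide_p1 r0) (collide_p2 r0) t.
Proof.
  intro Hr; destruct (ratio_gt_1_bounds _ Hr) as [Hplus [Hminus Hgap]].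
  unfold peakon_ode; rewrite collide_gap, exp_Ropp, exp_ln by lra.
  unfold collide_q1, collide_q2, collide_p1, collide_p2, center_shift, exp_gap_of_ratio,
    pdiff_of_ratio, ratio_at in *.
  set (e := exp (- (mu * t))) in *.
  assert (He : 0 < r0 * e) by lra.
  refine (conj _ (conj _ (conj _ _)));
    (auto_derive; fold e; [nonzero_or_positive | field; nonzero_or_positive]).
Qed.

Lemma collide_is_solution r0 C : 1 < r0 ->
  is_solution (collide_q1 r0 C) (collide_q2 r0 C) (collide_p1 r0) (collide_p2 r0)
    (Finite (ln r0 / mu)).
Proof.
  intro Hr; apply peakon_ode_is_solution.
  - apply Rdiv_lt_0_compat; [apply ln_gt_0 |]; lra.
  - intros t _ Ht; pose proof (ratio_at_gt_1 r0 t Hr Ht) as Hrt; split.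
    + destruct (ratio_gt_1_bounds _ Hrt) as [_ [_ Hgap]].
      pose proof (collide_gap r0 C t); pose proof (ln_gt_0 _ Hgap); lra.
    + exact (collide_peakon_ode r0 C t Hrt).
Qed.

Section SubcriticalSolution.

Variables (q1 q2 p1 p2 : R -> R) (T : Rbar).
Hypothesis Hsol : is_solution q1 q2 p1 p2 T.
Hypothesis Hmom : p1 0 + p2 0 = P.
Hypothesis Hen : energy (p1 0) (p2 0) (q1 0 - q2 0) = 1.
Hypothesis Hgap0 : 0 < q1 0 - q2 0.
Hypothesis Hu0 : p1 0 - p2 0 < 0.

Lemma subcritical_pdiff0 : p1 0 - p2 0 < - mu.
Proof. exact (energy_one_pdiff_lt _ _ _ Hen Hgap0 Hmom Hu0). Qed.

Lemma subcritical_invariants t : 0 <= t -> Rbar_lt t T ->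
  p1 t + p2 t = P /\ energy (p1 t) (p2 t) (q1 t - q2 t) = 1 /\ 0 < q1 t - q2 t.
Proof.
  intros Ht HtT; rewrite <- Hmom, <- Hen.
  split; [| split];
    [ apply (momentum_conserved q1 q2 p1 p2 T Hsol)
    | apply (energy_conserved q1 q2 p1 p2 T Hsol)
    | apply (solution_gap_pos q1 q2 p1 p2 T Hsol) ]; auto.
Qed.

Lemma subcritical_product_neg t : 0 <= t -> Rbar_lt t T -> p1 t * p2 t < 0.
Proof.
  intros Ht HtT; destruct (subcritical_invariants t Ht HtT) as [HPt [HE Hx]].
  apply (energy_one_subcritical _ _ _ HE Hx); congruence.
Qed.

Lemma subcritical_pdiff_lt t : 0 <= t -> Rbar_lt t T -> p1 t - p2 t < - mu.
Proof.
  intros Ht HtT.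
  assert (Hdecr : p1 t - p2 t <= p1 0 - p2 0).
  { apply (derive_nonpos_le_from_0 (fun s => p1 s - p2 s)
      (fun s => 2 * (p1 s * p2 s) * exp (- (q1 s - q2 s))) T); auto.
    - intros x Hx HxT; destruct (solution_peakon_ode _ _ _ _ _ Hsol x Hx HxT) as [_ [_ [Dp1 Dp2]]].
      replace (2 * (p1 x * p2 x) * exp (- (q1 x - q2 x)))
        with (p1 x * p2 x * exp (- (q1 x - q2 x)) - - (p1 x * p2 x * exp (- (q1 x - q2 x))))
        by ring.
      exact (is_derive_minus p1 p2 _ _ _ Dp1 Dp2).
    - intros x Hx HxT; pose proof (subcritical_product_neg x ltac:(lra) HxT).
      pose proof (exp_pos (- (q1 x - q2 x))); nra.
    - exact (solution_pdiff_at_right _ _ _ _ _ Hsol). }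
  pose proof subcritical_pdiff0; lra.
Qed.

Lemma subcritical_riccati_ratio t : 0 <= t -> Rbar_lt t T ->
  riccati_ratio (p1 t - p2 t) = ratio_at (riccati_ratio (p1 0 - p2 0)) t.
Proof.
  intros Ht HtT; pose proof subcritical_pdiff0 as Hu0'.
  assert (Hconst : riccati_ratio (p1 t - p2 t) * exp (mu * t)
                   = riccati_ratio (p1 0 - p2 0) * exp (mu * 0)).
  { apply (derive_zero_const_from_0 (fun s => riccati_ratio (p1 s - p2 s) * exp (mu * s)) T); auto.
    - intros x Hx HxT.
      destruct (solution_peakon_ode _ _ _ _ _ Hsol x Hx HxT) as [_ [_ [Dp1 Dp2]]].
      destruct (subcritical_invariants x (Rlt_le _ _ Hx) HxT) as [HPx [HEx _]].
      pose proof (energy_one_quadratic _ _ _ HEx) as Hq.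
      pose proof (subcritical_pdiff_lt x (Rlt_le _ _ Hx) HxT) as Hux.
      unfold riccati_ratio; auto_derive.
      + repeat split; try (eexists; eassumption); lra.
      + rewrite (is_derive_unique (fun y : R => p1 y) _ _ Dp1),
          (is_derive_unique (fun y : R => p2 y) _ _ Dp2).
        rewrite HPx, <- Hmu in Hq.
        replace (p1 x * p2 x * exp (- (q1 x - q2 x)))
          with ((mu * mu - (p1 x - p2 x) * (p1 x - p2 x)) / 4) by (rewrite <- Hq, <- HPx; field).
        field; lra.
    - apply (filterlim_fun_mult _ (fun s => riccati_ratio (p1 s - p2 s)) (fun s => exp (mu * s))).
      + apply (filterlim_ex_derive_comp _ _ riccati_ratio _ (solution_pdiff_at_right _ _ _ _ _ Hsol)).
        unfold riccati_ratio; auto_derive; lra.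
      + apply (ex_derive_within _ (fun s => exp (mu * s))); auto_derive; auto. }
  unfold ratio_at; rewrite Rmult_0_r, exp_0, Rmult_1_r in Hconst; rewrite <- Hconst.
  rewrite Rmult_assoc, <- exp_plus, Rplus_opp_r, exp_0; ring.
Qed.

Lemma subcritical_gap t : 0 <= t -> Rbar_lt t T ->
  q1 t - q2 t = ln (exp_gap_of_ratio (ratio_at (riccati_ratio (p1 0 - p2 0)) t)).
Proof.
  intros Ht HtT; pose proof (subcritical_pdiff_lt t Ht HtT) as Hu.
  rewrite <- subcritical_riccati_ratio, exp_gap_of_riccati_ratio by auto.
  destruct (subcritical_invariants t Ht HtT) as [HPt [HEt _]].
  rewrite <- (energy_one_exp_gap _ _ _ HEt HPt) by nra; symmetry; apply ln_exp.
Qed.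

End SubcriticalSolution.

Definition collision_time (u0 : R) : R := ln (riccati_ratio u0) / mu.

Lemma collision_time_pos u0 : u0 < - mu -> 0 < collision_time u0.
Proof.
  intro Hu; apply Rdiv_lt_0_compat; [apply ln_gt_0, riccati_ratio_gt_1 |]; assumption.
Qed.

Lemma subcritical_solution_exists a1 a2 b1 b2 :
  a2 < a1 -> energy b1 b2 (a1 - a2) = 1 -> b1 + b2 = P -> b1 - b2 < 0 ->
  exists q1 q2 p1 p2 : R -> R,
    is_solution q1 q2 p1 p2 (Finite (collision_time (b1 - b2))) /\
    has_init q1 q2 p1 p2 a1 a2 b1 b2.
Proof.
  intros Ha HE HPb Hu.
  pose proof (energy_one_pdiff_lt _ _ _ HE ltac:(lra) HPb Hu) as Hu'.
  set (r0 := riccati_ratio (b1 - b2)).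
  exists (collide_q1 r0 (a1 + a2 + center_shift r0)), (collide_q2 r0 (a1 + a2 + center_shift r0)),
    (collide_p1 r0), (collide_p2 r0).
  split; [exact (collide_is_solution r0 _ (riccati_ratio_gt_1 _ Hu')) |].
  assert (Hr0 : ratio_at r0 0 = r0) by (unfold ratio_at; rewrite Rmult_0_r, Ropp_0, exp_0; ring).
  assert (Hgap : exp_gap_of_ratio r0 = exp (a1 - a2)).
  { unfold r0; rewrite exp_gap_of_riccati_ratio, (energy_one_exp_gap _ _ _ HE HPb); nra. }
  unfold has_init, collide_q1, collide_q2, collide_p1, collide_p2.
  rewrite Hr0, Hgap, ln_exp; unfold r0; rewrite pdiff_of_riccati_ratio by exact Hu'.
  rewrite <- HPb; repeat split; field.
Qed.

Lemma subcritical_collision q1 q2 p1 p2 :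
  is_solution q1 q2 p1 p2 (Finite (collision_time (p1 0 - p2 0))) ->
  p1 0 + p2 0 = P -> energy (p1 0) (p2 0) (q1 0 - q2 0) = 1 ->
  0 < q1 0 - q2 0 -> p1 0 - p2 0 < 0 ->
  filterlim (fun t => q1 t - q2 t) (at_left (collision_time (p1 0 - p2 0))) (locally 0).
Proof.
  intros Hsol Hmom Hen Hgap0 Hu0.
  pose proof (energy_one_pdiff_lt _ _ _ Hen Hgap0 Hmom Hu0) as Hu.
  pose proof (collision_time_pos _ Hu) as HTc; pose proof (riccati_ratio_gt_1 _ Hu) as Hr0.
  unfold collision_time in *; set (r0 := riccati_ratio (p1 0 - p2 0)) in *.
  set (Tc := ln r0 / mu) in *.
  apply filterlim_ext_loc with (fun t => ln (exp_gap_of_ratio (ratio_at r0 t))).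
  - exists (mkposreal Tc HTc); intros y Hy HyT.
    change (Rabs (y - Tc) < Tc) in Hy; apply Rabs_def2 in Hy.
    symmetry; apply (subcritical_gap q1 q2 p1 p2 (Finite Tc)); simpl; auto; lra.
  - assert (Hcoll : ratio_at r0 Tc = 1) by (apply ratio_at_collision; lra).
    replace 0 with (ln (exp_gap_of_ratio (ratio_at r0 Tc)))
      by (rewrite Hcoll; unfold exp_gap_of_ratio; rewrite <- ln_1; f_equal; field; lra).
    apply (ex_derive_within _ (fun t => ln (exp_gap_of_ratio (ratio_at r0 t)))).
    unfold exp_gap_of_ratio, ratio_at in *; auto_derive; rewrite Hcoll; nonzero_or_positive.
Qed.

End Subcritical.

Lemma finite_time_collision a1 a2 b1 b2 :
  a2 < a1 -> energy b1 b2 (a1 - a2) = 1 -> (b1 + b2) * (b1 + b2) < 1 -> b1 - b2 < 0 ->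
  exists T : R, 0 < T /\
    (exists q1 q2 p1 p2 : R -> R,
       is_solution q1 q2 p1 p2 (Finite T) /\ has_init q1 q2 p1 p2 a1 a2 b1 b2) /\
    (forall q1 q2 p1 p2 : R -> R,
       is_solution q1 q2 p1 p2 (Finite T) -> has_init q1 q2 p1 p2 a1 a2 b1 b2 ->
       filterlim (fun t => q1 t - q2 t) (at_left T) (locally 0)).
Proof.
  intros Ha HE HP Hu; set (P := b1 + b2) in *.
  set (mu := sqrt (2 - P * P)).
  assert (Hmu : mu * mu = 2 - P * P) by (apply sqrt_sqrt; lra).
  assert (Hmu_pos : 0 < mu) by (apply sqrt_lt_R0; lra).
  exists (collision_time mu (b1 - b2)); split; [| split].
  - apply (collision_time_pos mu Hmu_pos), (energy_one_pdiff_lt P mu HP Hmu_pos Hmu _ _ (a1 - a2));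
      auto; lra.
  - apply (subcritical_solution_exists P mu); auto.
  - intros q1 q2 p1 p2 Hsol [H1 [H2 [H3 H4]]]; subst a1 a2 b1 b2.
    apply (subcritical_collision P mu); auto; lra.
Qed.

(** * Asymptotic collision: |p1 + p2| = 1 *)

Lemma energy_one_critical p1 p2 x :
  energy p1 p2 x = 1 -> 0 < x -> (p1 + p2) * (p1 + p2) = 1 -> p1 * p2 = 0.
Proof.
  rewrite energy_momentum; intros HE Hx HP; pose proof (exp_neg_lt_1 x Hx).
  assert (Hprod : (p1 * p2) * (2 * (1 - exp (- x))) = 0) by lra.
  apply Rmult_integral in Hprod; destruct Hprod; [assumption | lra].
Qed.

Section Critical.

Variable s : R.
Hypothesis Hs : s * s = 1.

Definition approach_q1 (w C t : R) : R :=
  (C + s * (t + ln (exp t + w)) + ln (1 + w * exp (- t))) / 2.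
Definition approach_q2 (w C t : R) : R :=
  (C + s * (t + ln (exp t + w)) - ln (1 + w * exp (- t))) / 2.
Definition approach_p1 (t : R) : R := (s - 1) / 2.
Definition approach_p2 (t : R) : R := (s + 1) / 2.

Lemma approach_peakon_ode w C t : 0 < w ->
  peakon_ode (approach_q1 w C) (approach_q2 w C) approach_p1 approach_p2 t.
Proof.
  intro Hw.
  assert (Hpos : 0 < w * exp (- t)) by (apply Rmult_lt_0_compat; [lra | apply exp_pos]).
  assert (Hgap : approach_q1 w C t - approach_q2 w C t = ln (1 + w * exp (- t)))
    by (unfold approach_q1, approach_q2; field).
  assert (Hprod : approach_p1 t * approach_p2 t = 0)
    by (unfold approach_p1, approach_p2; nra).
  unfold peakon_ode; rewrite Hprod, Hgap, exp_Ropp, exp_ln, !Rmult_0_l, Ropp_0 by lra.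
  pose proof (exp_pos t).
  unfold approach_q1, approach_q2, approach_p1, approach_p2.
  refine (conj _ (conj _ (conj _ _))); auto_derive; auto.
  all: first [ repeat split; lra | rewrite exp_Ropp; field; repeat split; lra ].
Qed.

Lemma approach_is_solution w C : 0 < w ->
  is_solution (approach_q1 w C) (approach_q2 w C) approach_p1 approach_p2 p_infty.
Proof.
  intro Hw; apply peakon_ode_is_solution; [exact I |]; intros t _ _; split.
  - assert (0 < ln (1 + w * exp (- t))); [| unfold approach_q1, approach_q2; lra].
    apply ln_gt_0; pose proof (exp_pos (- t)); nra.
  - exact (approach_peakon_ode w C t Hw).
Qed.

Lemma critical_solution_exists a1 a2 b1 b2 :
  a2 < a1 -> b1 + b2 = s -> b1 - b2 = -1 ->
  exists q1 q2 p1 p2 : R -> R,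
    is_solution q1 q2 p1 p2 p_infty /\ has_init q1 q2 p1 p2 a1 a2 b1 b2.
Proof.
  intros Ha Hsum Hdiff.
  set (w := exp (a1 - a2) - 1).
  assert (Hw : 0 < w) by (pose proof (exp_increasing 0 (a1 - a2)); rewrite exp_0 in *; unfold w; lra).
  exists (approach_q1 w (a1 + a2 - s * (a1 - a2))), (approach_q2 w (a1 + a2 - s * (a1 - a2))),
    approach_p1, approach_p2.
  split; [exact (approach_is_solution w _ Hw) |].
  assert (Hw0 : 1 + w * exp (- 0) = exp (a1 - a2)) by (unfold w; rewrite Ropp_0, exp_0; ring).
  assert (Hw1 : exp 0 + w = exp (a1 - a2)) by (unfold w; rewrite exp_0; ring).
  unfold has_init, approach_q1, approach_q2, approach_p1, approach_p2.
  rewrite Hw0, Hw1, ln_exp; repeat split; lra.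
Qed.

Section CriticalSolution.

Variables (q1 q2 p1 p2 : R -> R) (T : Rbar).
Hypothesis Hsol : is_solution q1 q2 p1 p2 T.
Hypothesis Hmom : p1 0 + p2 0 = s.
Hypothesis Hen : energy (p1 0) (p2 0) (q1 0 - q2 0) = 1.
Hypothesis Hgap0 : 0 < q1 0 - q2 0.
Hypothesis Hu0 : p1 0 - p2 0 < 0.

Lemma critical_product t : 0 <= t -> Rbar_lt t T -> p1 t * p2 t = 0.
Proof.
  intros Ht HtT; apply (energy_one_critical _ _ (q1 t - q2 t)).
  - rewrite <- Hen; exact (energy_conserved q1 q2 p1 p2 T Hsol t Ht HtT).
  - exact (solution_gap_pos q1 q2 p1 p2 T Hsol t Ht HtT).
  - rewrite (momentum_conserved q1 q2 p1 p2 T Hsol t Ht HtT), Hmom; exact Hs.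
Qed.

Lemma critical_pdiff t : 0 <= t -> Rbar_lt t T -> p1 t - p2 t = -1.
Proof.
  intros Ht HtT.
  assert (Hinit : p1 0 - p2 0 = -1).
  { assert (p1 0 * p2 0 = 0) by (apply (energy_one_critical _ _ _ Hen Hgap0); rewrite Hmom; exact Hs).
    nra. }
  rewrite <- Hinit; apply (derive_zero_const_from_0 (fun t => p1 t - p2 t) T); auto.
  - intros x Hx HxT; destruct (solution_peakon_ode _ _ _ _ _ Hsol x Hx HxT) as [_ [_ [Dp1 Dp2]]].
    rewrite (critical_product x (Rlt_le _ _ Hx) HxT), Rmult_0_l in Dp1, Dp2.
    replace 0 with (0 - - 0) by ring; exact (is_derive_minus p1 p2 _ _ _ Dp1 Dp2).
  - exact (solution_pdiff_at_right _ _ _ _ _ Hsol).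
Qed.

(* With [p1 - p2 = -1] and [x = q1 - q2]: [(exp x - 1)' = - (exp x - 1)]. *)
Lemma critical_gap t : 0 <= t -> Rbar_lt t T ->
  q1 t - q2 t = ln (1 + (exp (q1 0 - q2 0) - 1) * exp (- t)).
Proof.
  intros Ht HtT.
  assert (Hconst : (exp (q1 t - q2 t) - 1) * exp t = (exp (q1 0 - q2 0) - 1) * exp 0).
  { apply (derive_zero_const_from_0 (fun t => (exp (q1 t - q2 t) - 1) * exp t) T); auto.
    - intros x Hx HxT; destruct (solution_peakon_ode _ _ _ _ _ Hsol x Hx HxT) as [Dq1 [Dq2 _]].
      pose proof (critical_pdiff x (Rlt_le _ _ Hx) HxT) as Hux.
      auto_derive.
      + repeat split; eexists; eassumption.
      + rewrite (is_derive_unique (fun y : R => q1 y) _ _ Dq1),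
          (is_derive_unique (fun y : R => q2 y) _ _ Dq2), exp_Ropp.
        replace (p1 x) with (p2 x - 1) by lra.
        pose proof (exp_pos (q1 x + - q2 x)); unfold Rminus; field; lra.
    - apply (filterlim_fun_mult _ (fun t => exp (q1 t - q2 t) - 1) exp).
      + apply (filterlim_ex_derive_comp _ _ (fun y => exp y - 1) _
          (solution_gap_at_right _ _ _ _ _ Hsol)); auto_derive; auto.
      + apply (ex_derive_within _ exp); auto_derive; auto. }
  rewrite exp_0, Rmult_1_r in Hconst; rewrite <- Hconst, exp_Ropp.
  replace (1 + (exp (q1 t - q2 t) - 1) * exp t * / exp t) with (exp (q1 t - q2 t))
    by (field; apply Rgt_not_eq, exp_pos).
  symmetry; apply ln_exp.
Qed.

End CriticalSolution.

Lemma critical_approach q1 q2 p1 p2 :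
  is_solution q1 q2 p1 p2 p_infty -> p1 0 + p2 0 = s ->
  energy (p1 0) (p2 0) (q1 0 - q2 0) = 1 -> 0 < q1 0 - q2 0 -> p1 0 - p2 0 < 0 ->
  filterlim (fun t => q1 t - q2 t) (Rbar_locally p_infty) (locally 0).
Proof.
  intros Hsol Hmom Hen Hgap0 Hu0; set (w := exp (q1 0 - q2 0) - 1).
  apply filterlim_ext_loc with (fun t => ln (1 + w * exp (- t))).
  - exists 0; intros t Ht; symmetry; apply (critical_gap q1 q2 p1 p2 p_infty); simpl; auto; lra.
  - replace 0 with (ln (1 + w * 0)) by (rewrite Rmult_0_r, Rplus_0_r; apply ln_1).
    apply (filterlim_ex_derive_comp _ (fun t => exp (- t)) (fun y => ln (1 + w * y))).
    + eapply filterlim_comp; [apply filterlim_Rbar_opp | exact is_lim_exp_m].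
    + assert (0 < w) by (pose proof (exp_increasing 0 (q1 0 - q2 0) Hgap0); rewrite exp_0 in *; unfold w; lra).
      auto_derive; lra.
Qed.

End Critical.

Lemma asymptotic_collision a1 a2 b1 b2 :
  a2 < a1 -> energy b1 b2 (a1 - a2) = 1 -> (b1 + b2) * (b1 + b2) = 1 -> b1 - b2 < 0 ->
  (exists q1 q2 p1 p2 : R -> R,
     is_solution q1 q2 p1 p2 p_infty /\ has_init q1 q2 p1 p2 a1 a2 b1 b2) /\
  (forall q1 q2 p1 p2 : R -> R,
     is_solution q1 q2 p1 p2 p_infty -> has_init q1 q2 p1 p2 a1 a2 b1 b2 ->
     filterlim (fun t => q1 t - q2 t) (Rbar_locally p_infty) (locally 0)).
Proof.
  intros Ha HE HP Hu; split.
  - assert (b1 * b2 = 0) by (apply (energy_one_critical _ _ _ HE); auto; lra).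
    apply (critical_solution_exists (b1 + b2)); auto; nra.
  - intros q1 q2 p1 p2 Hsol [H1 [H2 [H3 H4]]]; subst a1 a2 b1 b2.
    apply (critical_approach (p1 0 + p2 0) HP q1 q2 p1 p2); auto; lra.
Qed.

Theorem lemma3 :
  (* Case |p1+p2| < 1, p1 - p2 < 0 at t = 0: collision in finite time T. *)
  (forall a1 a2 b1 b2 : R,
     a2 < a1 -> 2 * Ham a1 a2 b1 b2 = 1 ->
     Rabs (b1 + b2) < 1 -> b1 - b2 < 0 ->
     exists T : R, 0 < T /\
       (exists q1 q2 p1 p2 : R -> R,
          is_solution q1 q2 p1 p2 (Finite T) /\ has_init q1 q2 p1 p2 a1 a2 b1 b2) /\
       (forall q1 q2 p1 p2 : R -> R,
          is_solution q1 q2 p1 p2 (Finite T) -> has_init q1 q2 p1 p2 a1 a2 b1 b2 ->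
          filterlim (fun t => q1 t - q2 t) (at_left T) (locally 0))) /\
  (* Case |p1+p2| = 1, p1 - p2 < 0 at t = 0: global solution, asymptotic approach. *)
  (forall a1 a2 b1 b2 : R,
     a2 < a1 -> 2 * Ham a1 a2 b1 b2 = 1 ->
     Rabs (b1 + b2) = 1 -> b1 - b2 < 0 ->
       (exists q1 q2 p1 p2 : R -> R,
          is_solution q1 q2 p1 p2 p_infty /\ has_init q1 q2 p1 p2 a1 a2 b1 b2) /\
       (forall q1 q2 p1 p2 : R -> R,
          is_solution q1 q2 p1 p2 p_infty -> has_init q1 q2 p1 p2 a1 a2 b1 b2 ->
          filterlim (fun t => q1 t - q2 t) (Rbar_locally p_infty) (locally 0))).
Proof.
  split; intros a1 a2 b1 b2 Ha HH HP Hu; rewrite Ham_energy in HH by exact Ha;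
    pose proof (Rsqr_abs (b1 + b2)) as Hsq; unfold Rsqr in Hsq.
  - apply finite_time_collision; auto.
    rewrite Hsq; pose proof (Rabs_pos (b1 + b2)); nra.
  - apply asymptotic_collision; auto.
    rewrite Hsq, HP; ring.
Qed.
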